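(* There is a constant $c$ such that the following holds. Let $n\in\mathbb N$, $f:\mathbb B^n\to\mathbb B$, and let $X\in\mathrm{IS}_{br}$ compute $f$. Then there exists $Y\in\mathrm{IS}_{br}$ in which the basic instruction $\mathrm{out}.\mathrm{set}{:}F$ does not occur (in any plain, positive test or negative test instruction) such that $Y$ computes $f$ and $|Y|\le c\cdot|X|$.
   Context: $\mathbb B=\{T,F\}$. A primitive instruction is one of: a plain basic instruction $a$, a positive test instruction $+a$, a negative test instruction $-a$ (for a basic instruction $a$), a forward jump instruction $\#l$ ($l\in\mathbb N$), or the termination instruction $!$. An instruction sequence is a finite nonempty sequence $X=u_1;\dots;u_k$ of primitive instructions; its length is $|X|=k$. Basic instructions have the form $f.m$ where the focus $f$ is one of $\mathrm{in}{:}i$, $\mathrm{aux}{:}i$ ($i\ge 1$) or $\mathrm{out}$, each naming a Boolean register, and the method $m$ is one of $\mathrm{set}{:}T$, $\mathrm{set}{:}F$, $\mathrm{get}$. Executing $f.\mathrm{set}{:}b$ sets register $f$ to $b$ and yields reply $b$; executing $f.\mathrm{get}$ leaves the register unchanged and yields its content as reply. Execution of $X=u_1;\dots;u_k$: a counter starts at $1$. If the counter exceeds $k$, execution deadlocks. At position $i$: if $u_i=!$, execution terminates; if $u_i=\#l$, execution deadlocks if $l=0$ and otherwise the counter becomes $i+l$; if $u_i$ is $a$, $+a$ or $-a$, the basic instruction $a$ is executed yielding reply $r$, and the counter becomes $i+1$ for $u_i=a$; for $u_i=+a$ it becomes $i+1$ if $r=T$ and $i+2$ if $r=F$; for $u_i=-a$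 it becomes $i+1$ if $r=F$ and $i+2$ if $r=T$. $\mathrm{IS}_{br}$ is the set of instruction sequences in which every basic instruction occurring belongs to $\{f.\mathrm{get}: f=\mathrm{in}{:}i \text{ or } f=\mathrm{aux}{:}i\}\cup\{f.\mathrm{set}{:}b: f=\mathrm{aux}{:}i \text{ or } f=\mathrm{out},\ b\in\mathbb B\}$. $X\in\mathrm{IS}_{br}$ computes $f:\mathbb B^n\to\mathbb B$ if for every $(b_1,\dots,b_n)\in\mathbb B^n$: when $X$ is executed with register $\mathrm{in}{:}j$ initialised to $b_j$ ($j\le n$) and all registers $\mathrm{aux}{:}i$ and $\mathrm{out}$ initialised to $F$, execution terminates (does not deadlock) without ever executing a basic instruction with focus $\mathrm{in}{:}j$ for $j>n$, and at termination register $\mathrm{out}$ contains $f(b_1,\dots,b_n)$. *)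

From HB Require Import structures.
From mathcomp Require Import all_boot.
Set Implicit Arguments. Unset Strict Implicit. Unset Printing Implicit Defensive.

(* Foci: in:i, aux:i (i >= 1, enforced in IS_br), out. *)
Inductive focus := FIn of nat | FAux of nat | FOut.
Inductive method := MSet of bool | MGet.
Record basic := Basic { bfocus : focus; bmethod : method }.

Inductive instr :=
| IPlain of basic
| IPos of basic
| INeg of basic
| IJump of nat
| ITerm.

Definition focus_eqb (x y : focus) : bool :=
  match x, y with FIn i, FIn j => i == j | FAux i, FAux j => i == j
  | FOut, FOut => true | _, _ => false end.
Lemma focus_eqP : Equality.axiom focus_eqb.
Proof. case=> [i|i|] [j|j|] /=; try (by constructor; congruence);
  by apply: (iffP eqP) => [->|[]]. Qed.
HB.instance Definition _ := hasDecEq.Build focus focus_eqP.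
Definition method_eqb (x y : method) : bool :=
  match x, y with MSet a, MSet b => a == b | MGet, MGet => true | _, _ => false end.
Lemma method_eqP : Equality.axiom method_eqb.
Proof. case=> [a|] [b|] /=; try (by constructor; congruence);
  by apply: (iffP eqP) => [->|[]]. Qed.
HB.instance Definition _ := hasDecEq.Build method method_eqP.
Definition basic_eqb (x y : basic) : bool :=
  (bfocus x == bfocus y) && (bmethod x == bmethod y).
Lemma basic_eqP : Equality.axiom basic_eqb.
Proof. case=> f m [g k]; rewrite /basic_eqb /=;
  apply: (iffP andP) => [[/eqP-> /eqP->]|[-> ->]] //. Qed.
HB.instance Definition _ := hasDecEq.Build basic basic_eqP.
Definition instr_eqb (x y : instr) : bool :=
  match x, y with
  | IPlain a, IPlain b | IPos a, IPos b | INeg a, INeg b => a == b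
  | IJump l, IJump m => l == m | ITerm, ITerm => true | _, _ => false end.
Lemma instr_eqP : Equality.axiom instr_eqb.
Proof. case=> [a|a|a|l|] [b|b|b|m|] /=; try (by constructor; congruence);
  by apply: (iffP eqP) => [->|[]]. Qed.
HB.instance Definition _ := hasDecEq.Build instr instr_eqP.

Notation iseq := (seq instr).

Record regs := Regs { rin : nat -> bool; raux : nat -> bool; rout : bool }.

Definition read (s : regs) (f : focus) : bool :=
  match f with FIn i => rin s i | FAux i => raux s i | FOut => rout s end.

Definition write (s : regs) (f : focus) (b : bool) : regs :=
  match f with
  | FIn i => Regs (fun j => if j == i then b else rin s j) (raux s) (rout s)
  | FAux i => Regs (rin s) (fun j => if j == i then b else raux s j) (rout s)
  | FOut => Regs (rin s) (raux s) b
  end.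

Definition exec_basic (s : regs) (a : basic) : regs * bool :=
  match bmethod a with
  | MSet b => (write s (bfocus a) b, b)
  | MGet => (s, read s (bfocus a))
  end.

Definition br_basic (a : basic) : bool :=
  match bfocus a, bmethod a with
  | FIn i, MGet => 0 < i
  | FAux i, _ => 0 < i
  | FOut, MSet _ => true
  | _, _ => false
  end.

Definition instr_basic (u : instr) : option basic :=
  match u with IPlain a | IPos a | INeg a => Some a | _ => None end.

Definition IS_br (X : iseq) : Prop :=
  0 < size X /\ forall u, u \in X -> forall a, instr_basic u = Some a -> br_basic a.

Definition no_out_setF (X : iseq) : Prop :=
  forall u, u \in X -> instr_basic u <> Some (Basic FOut (MSet false)).

(* Outcome of a run. [Forbidden]: a basic instruction with focus in:j, j > n,
   was executed. [OutOfFuel]: step bound exhausted. *)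
Inductive outcome := Terminated of regs | Deadlock | Forbidden | OutOfFuel.

(* run with fuel; counter [pc] is 1-based *)
Fixpoint run (n : nat) (X : iseq) (fuel pc : nat) (s : regs) : outcome :=
  match fuel with
  | 0 => OutOfFuel
  | fuel'.+1 =>
    if (pc == 0) || (size X < pc) then Deadlock else
    let u := nth ITerm X pc.-1 in
    let step (a : basic) (k : bool -> nat) :=
      match bfocus a with
      | FIn j => if n < j then Forbidden
                 else let (s', r) := exec_basic s a in run n X fuel' (k r) s'
      | _ => let (s', r) := exec_basic s a in run n X fuel' (k r) s'
      end in
    match u with
    | ITerm => Terminated s
    | IJump l => if l == 0 then Deadlock else run n X fuel' (pc + l) s
    | IPlain a => step a (fun _ => pc.+1)
    | IPos a => step a (fun r => if r then pc.+1 else pc.+2)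
    | INeg a => step a (fun r => if r then pc.+2 else pc.+1)
    end
  end.

Definition init_regs (n : nat) (b : n.-tuple bool) : regs :=
  Regs (fun j => if (0 < j) && (j <= n) then nth false b j.-1 else false)
       (fun _ => false) false.

Definition computes (X : iseq) (n : nat) (f : n.-tuple bool -> bool) : Prop :=
  forall b : n.-tuple bool,
    exists fuel s, run n X fuel 1 (init_regs b) = Terminated s /\ rout s = f b.

From mathcomp Require Import all_boot zify.

Set Implicit Arguments.
Unset Strict Implicit.
Unset Printing Implicit Defensive.

(* Pick an auxiliary register aux:k that X never mentions and
   translate X instruction by instruction into three-instruction blocks:
   every access to out is redirected to aux:k, a jump #l becomes #3l, each
   basic instruction is padded with jumps to the start of the block of its
   successor(s), and ! becomes  +aux:k.get ; out.set:T ; !  which copies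
   aux:k into out (still F) just before terminating.  The translation never
   uses out.set:F and has length 3|X|, so c = 3 works. *)

Inductive step_result := Continue of nat & regs | Halt of outcome.

Definition forbidden (n : nat) (a : basic) : bool :=
  if bfocus a is FIn j then n < j else false.

Definition step_basic (n : nat) (a : basic) (next : bool -> nat) (s : regs) :=
  if forbidden n a then Halt Forbidden
  else Continue (next (exec_basic s a).2) (exec_basic s a).1.

Definition step_instr (n : nat) (u : instr) (pc : nat) (s : regs) : step_result :=
  match u with
  | ITerm => Halt (Terminated s)
  | IJump l => if l == 0 then Halt Deadlock else Continue (pc + l) s
  | IPlain a => step_basic n a (fun _ => pc.+1) s
  | IPos a => step_basic n a (fun r => if r then pc.+1 else pc.+2) s
  | INeg a => step_basic n a (fun r => if r then pc.+2 else pc.+1) s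
  end.

Definition step (n : nat) (X : iseq) (pc : nat) (s : regs) : step_result :=
  if (pc == 0) || (size X < pc) then Halt Deadlock
  else step_instr n (nth ITerm X pc.-1) pc s.

Lemma run_S n X fuel pc s :
  run n X fuel.+1 pc s =
  match step n X pc s with
  | Continue pc' s' => run n X fuel pc' s'
  | Halt o => o
  end.
Proof.
rewrite /= /step; case: ifP => // _.
case: (nth _ _ _) => [a|a|a|l|] //=; last by case: (l == 0).
all: rewrite /step_basic /forbidden.
all: by case: a => [[j|j|] [b|]] /=; try case: (n < j).
Qed.

Definition redirect (k : nat) (a : basic) : basic :=
  Basic (if bfocus a is FOut then FAux k else bfocus a) (bmethod a).

Lemma forbidden_redirect n k a : forbidden n (redirect k a) = forbidden n a.
Proof. by case: a => [[]]. Qed.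

(* The block replacing one instruction; the block of the i-th instruction
   (0-based) occupies positions 3i+1, 3i+2, 3i+3. *)
Definition block (k : nat) (u : instr) : iseq :=
  match u with
  | IPlain a => [:: IPlain (redirect k a); IJump 2; IJump 2]
  | IPos a => [:: IPos (redirect k a); IJump 2; IJump 4]
  | INeg a => [:: INeg (redirect k a); IJump 2; IJump 4]
  | IJump l => [:: IJump (3 * l); ITerm; ITerm]
  | ITerm => [:: IPos (Basic (FAux k) MGet); IPlain (Basic FOut (MSet true)); ITerm]
  end.

Definition translate (k : nat) (X : iseq) : iseq := flatten [seq block k u | u <- X].

Lemma size_block k u : size (block k u) = 3.
Proof. by case: u. Qed.

Lemma size_translate k X : size (translate k X) = 3 * size X.
Proof.
elim: X => //= u X IH.
by rewrite /translate /= size_cat size_block -/(translate k X) IH mulnS.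
Qed.

Lemma nth_translate k X i r : i < size X -> r < 3 ->
  nth ITerm (translate k X) (3 * i + r) = nth ITerm (block k (nth ITerm X i)) r.
Proof.
elim: X i => [|u X IH] [|i] //= Hi Hr; rewrite /translate /= nth_cat size_block.
  by rewrite Hr.
rewrite ifF; last by lia.
by rewrite -IH //; congr nth; lia.
Qed.

Lemma step_in_range n X i s : i < size X ->
  step n X i.+1 s = step_instr n (nth ITerm X i) i.+1 s.
Proof. by move=> Hi; rewrite /step /= ltnS leqNgt Hi. Qed.

Lemma step_out_of_range n X i s : size X <= i -> step n X i.+1 s = Halt Deadlock.
Proof. by move=> Hi; rewrite /step /= ltnS Hi. Qed.

Lemma translate_block_steps n k X i : i < size X ->
  let b := block k (nth ITerm X i) in
  [/\ forall s, step n (translate k X) (3 * i).+1 s = step_instr n (nth ITerm b 0) (3 * i).+1 s,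
      forall s, step n (translate k X) (3 * i).+2 s = step_instr n (nth ITerm b 1) (3 * i).+2 s &
      forall s, step n (translate k X) (3 * i).+3 s = step_instr n (nth ITerm b 2) (3 * i).+3 s].
Proof.
move=> Hi b; have step_at r s : r < 3 ->
    step n (translate k X) (3 * i + r).+1 s = step_instr n (nth ITerm b r) (3 * i + r).+1 s.
  move=> Hr; rewrite -[3 * i + r]/((3 * i + r).+1.-1) -nth_translate //.
  by rewrite step_in_range // size_translate; lia.
by split=> s; [rewrite -[(3 * i).+1]addn0 | rewrite -addn1 | rewrite -addn2]; apply: step_at.
Qed.

Lemma mem_translate k X u :
  u \in translate k X -> exists2 v, v \in X & u \in block k v.
Proof. by move=> /flattenP [bl /mapP [v Hv ->] Hu]; exists v. Qed.

Lemma block_br k v u : 0 < k ->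
  (forall b, instr_basic v = Some b -> br_basic b) ->
  u \in block k v -> forall a, instr_basic u = Some a -> br_basic a.
Proof.
move=> Hk Hv; have Hred b : instr_basic v = Some b -> br_basic (redirect k b).
  by move=> /Hv; case: b => [[j|j|] [m|]].
by case: v Hv Hred => [b|b|b|l|] _ Hred; rewrite !inE => /or3P [] /eqP -> a //= [<-] //;
  exact: Hred.
Qed.

Lemma block_no_out_setF k v u :
  u \in block k v -> instr_basic u <> Some (Basic FOut (MSet false)).
Proof.
by case: v => [b|b|b|l|]; rewrite !inE => /or3P [] /eqP -> //= [];
  case: b => [[]].
Qed.

Lemma translate_IS_br k X : 0 < k -> IS_br X -> IS_br (translate k X).
Proof.
move=> Hk [HX0 HXbr]; split; first by rewrite size_translate muln_gt0.
by move=> u /mem_translate [v Hv]; apply: block_br Hk (HXbr v Hv).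
Qed.

Lemma translate_no_out_setF k X : no_out_setF (translate k X).
Proof. by move=> u /mem_translate [v _]; apply: block_no_out_setF. Qed.

Definition aux_index (u : instr) : nat :=
  if instr_basic u is Some (Basic (FAux j) _) then j else 0.

Definition fresh (k : nat) (X : iseq) : Prop :=
  forall u, u \in X -> forall a, instr_basic u = Some a -> bfocus a <> FAux k.

Lemma fresh_max_aux X : fresh (\max_(u <- X) aux_index u).+1 X.
Proof.
move=> u Hu [f m] Ha /= Hf; have := @leq_bigmax_seq _ X xpredT aux_index u Hu erefl.
by rewrite /aux_index Ha Hf ltnn.
Qed.

(* s' shadows s: same registers, except that the value of out is held in
   aux:k while out itself stays F. *)
Record shadow (k : nat) (s s' : regs) : Prop := Shadow {
  shadow_in : rin s' = rin s;
  shadow_aux : forall j, j != k -> raux s' j = raux s j;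
  shadow_k : raux s' k = rout s;
  shadow_out : rout s' = false }.

Lemma shadow_init n (b : n.-tuple bool) k : shadow k (init_regs b) (init_regs b).
Proof. by []. Qed.

Lemma exec_redirect k s s' a : shadow k s s' -> bfocus a <> FAux k ->
  (exec_basic s' (redirect k a)).2 = (exec_basic s a).2 /\
  shadow k (exec_basic s a).1 (exec_basic s' (redirect k a)).1.
Proof.
case: a => [[j|j|] [b|]] [Hin Haux Hk Hout] Hf; rewrite /exec_basic /redirect /=.
- by split=> //; split; rewrite //= Hin.
- by rewrite Hin; split.
- have Hjk : j != k by apply/eqP=> Ejk; apply: Hf; rewrite Ejk.
  split=> //; split=> //= [j'|]; last by rewrite eq_sym (negbTE Hjk).
  by case: (j' == j) => // /Haux.
- have Hjk : j != k by apply/eqP=> Ejk; apply: Hf; rewrite Ejk.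
  by rewrite Haux //; split.
- split=> //; split=> //=; last by rewrite eqxx.
  by move=> j' Hj'; rewrite (negbTE Hj'); apply: Haux.
- by [].
Qed.

Section Simulation.

Variables (n k : nat) (X : iseq).
Hypothesis k_fresh : fresh k X.

Let Y := translate k X.

Let entry (pc : nat) : nat := (3 * pc.-1).+1.

Lemma translate_continue pc pc' s s' t :
  shadow k s s' -> step n X pc s = Continue pc' t ->
  exists2 t', shadow k t t' &
    exists m, forall fuel, run n Y (m + fuel) (entry pc) s' = run n Y fuel (entry pc') t'.
Proof.
move=> Hsh; case: pc => [|i] //.
have [Hi|Hi] := ltnP i (size X); last by rewrite step_out_of_range.
have Hu := mem_nth ITerm Hi; have [S0 S1 S2] := translate_block_steps n k Hi.
rewrite step_in_range //.
move: Hu S0 S1 S2; case: (nth ITerm X i) => [a|a|a|l|] Hu S0 S1 S2 //=; last first.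
  case: l {Hu S1 S2} S0 => // l S0 [<- <-]; exists s' => //; exists 1 => fuel.
  by rewrite /entry add1n run_S S0; cbn -[run]; congr run; lia.
(* A basic instruction: its redirected copy gives the same reply, after which
   the padding jump reached leads to the block of the successor. *)
all: rewrite /step_basic; case: ifP => // Hforb [<- <-].
all: have [Erep Esh] := exec_redirect Hsh (k_fresh Hu erefl).
all: exists (exec_basic s' (redirect k a)).1 => //; exists 2 => fuel.
all: rewrite /entry !addSn add0n run_S S0; cbn -[run].
all: rewrite /step_basic forbidden_redirect Hforb ?Erep.
all: by case: (exec_basic s a).2; rewrite run_S ?S1 ?S2; cbn -[run]; congr run; lia.
Qed.

(* When X halts, the block of ! copies aux:k into out and halts as well. *)
Lemma translate_halt pc s s' t :
  shadow k s s' -> step n X pc s = Halt (Terminated t) ->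
  exists t', run n Y 3 (entry pc) s' = Terminated t' /\ rout t' = rout t.
Proof.
move=> [_ _ Hk Hout]; case: pc => [|i] //.
have [Hi|Hi] := ltnP i (size X); last by rewrite step_out_of_range.
have [S0 S1 S2] := translate_block_steps n k Hi.
rewrite step_in_range //.
move: S0 S1 S2; case: (nth ITerm X i) => [a|a|a|l|] S0 S1 S2;
  rewrite /step_instr /step_basic; try by case: ifP.
case=> <-; rewrite /entry run_S S0; cbn -[run]; rewrite -Hk.
case: (raux s' k).
- by rewrite run_S S1; cbn -[run]; rewrite run_S S2; eexists.
- by rewrite run_S S2; cbn -[run]; eexists.
Qed.

Lemma translate_terminates fuel pc s s' t :
  shadow k s s' -> run n X fuel pc s = Terminated t ->
  exists fuel' t', run n Y fuel' (entry pc) s' = Terminated t' /\ rout t' = rout t.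
Proof.
elim: fuel pc s s' => [|fuel IH] pc s s' Hsh //; rewrite run_S.
case Estep: (step n X pc s) => [pc' u|o] Hrun.
- have [u' Hsh' [m Hm]] := translate_continue Hsh Estep.
  have [fuel' [t' [Hr Ht]]] := IH _ _ _ Hsh' Hrun.
  by exists (m + fuel'), t'; rewrite Hm.
- have [t' Ht'] := translate_halt Hsh (etrans Estep (congr1 Halt Hrun)).
  by exists 3, t'.
Qed.

(* Starting from the initial state, which shadows itself, the translation
   computes the same function. *)
Lemma translate_computes (f : n.-tuple bool -> bool) : computes X f -> computes Y f.
Proof.
move=> HX b; have [fuel [t [Hrun <-]]] := HX b.
exact: translate_terminates (shadow_init b k) Hrun.
Qed.

End Simulation.

Theorem theorem4 :
  exists c : nat,
    forall (n : nat) (f : n.-tuple bool -> bool) (X : iseq),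
      IS_br X -> computes X f ->
      exists Y : iseq,
        IS_br Y /\ no_out_setF Y /\ computes Y f /\ size Y <= c * size X.
Proof.
exists 3 => n f X HX Hcomp.
pose k := (\max_(u <- X) aux_index u).+1.
have k_fresh : fresh k X := @fresh_max_aux X.
exists (translate k X); split; first exact: translate_IS_br.
split; first exact: translate_no_out_setF.
split; last by rewrite size_translate.
exact (translate_computes k_fresh Hcomp).
Qed.
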